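(* Let $G$ be a connected bipartite graph with color classes $E$ (emerald) and $V$ (violet), and fix a triangulation $\mathscr T$ of the root polytope $Q_G$. Let $\Sigma$ be a cycle-free subgraph of $G$ (with vertex set $E\cup V$) such that the corresponding simplex $\sigma\subset Q_G$ is an interior face of $\mathscr T$, and let $C$ be a connected component of $\Sigma$. Then there is a unique maximal simplex of $\mathscr T$ containing $\sigma$ such that in the corresponding spanning tree $\Gamma_C\supset\Sigma$, every edge of $\Gamma_C\setminus\Sigma$ has its violet endpoint facing $C$.
   Context: $Q_G\subset\mathbf R^E\oplus\mathbf R^V$ is the convex hull of $\mathbf i_{\{e\}}+\mathbf i_{\{v\}}$ over edges $ev$ of $G$. The simplex corresponding to a cycle-free set of edges is the convex hull of the corresponding vertices of $Q_G$ (these are affinely independent exactly when the edge set is cycle-free); maximal simplices correspond to spanning trees. A triangulation is a collection of full-dimensional such simplices pairwise meeting in common faces with union $Q_G$; its faces are the faces of these simplices, and a face is interior if it is not contained in the boundary of $Q_G$. For a tree $\Gamma$ containing a connected subgraph $C$ and an edge $\varepsilon\in\Gamma\setminus C$, the endpoint of $\varepsilon$ closer to $C$ in $\Gamma$ is said to face $C$. *)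

From mathcomp Require Import all_boot all_order all_algebra.
From mathcomp Require Import reals.
Set Implicit Arguments. Unset Strict Implicit. Unset Printing Implicit Defensive.
Import Order.TTheory GRing.Theory Num.Theory.
Local Open Scope ring_scope.

Section RootPolytope.
Variables (E V : finType).

(* A bipartite graph with colour classes E (emerald) and V (violet) is given by
   its edge set, a subset of E * V; subgraphs are subsets of it.
   Vertices of the graph are the elements of E + V. *)
Definition sadj (S : {set E * V}) : rel (E + V) :=
  fun x y => match x, y with
             | inl e, inr v => (e, v) \in S
             | inr v, inl e => (e, v) \in S
             | _, _ => false
             end.

Definition gconnected (S : {set E * V}) : Prop :=
  forall x y : E + V, connect (sadj S) x y.

Definition has_cycle (S : {set E * V}) : Prop :=
  exists c : seq (E + V), [/\ uniq c, (3 <= size c)%N & cycle (sadj S) c].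

Definition cycle_free (S : {set E * V}) : Prop := ~ has_cycle S.

Definition spanning_tree (G S : {set E * V}) : Prop :=
  [/\ S \subset G, cycle_free S & gconnected S].

Definition component (S : {set E * V}) (C : {set E + V}) : Prop :=
  exists x : E + V, C = [set y | connect (sadj S) x y].

Definition within (S : {set E * V}) (C : {set E + V}) (x : E + V) (n : nat) : Prop :=
  exists p : seq (E + V), [/\ path (sadj S) x p, last x p \in C & (size p <= n)%N].

Definition closer (S : {set E * V}) (C : {set E + V}) (x y : E + V) : Prop :=
  exists n : nat, within S C x n /\ ~ within S C y n.

Variable R : realType.

(* points of R^E (+) R^V are functions E + V -> R *)
Definition vpoint (a : E * V) : E + V -> R :=
  fun z => (z == inl a.1)%:R + (z == inr a.2)%:R.

(* convex hull of the points i_e + i_v, (e,v) in S: the simplex of S when S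
   is cycle-free, and the root polytope Q_G when S = G *)
Definition conv (S : {set E * V}) (x : E + V -> R) : Prop :=
  exists lam : E * V -> R,
    [/\ forall a, 0 <= lam a, forall a, a \notin S -> lam a = 0,
        \sum_a lam a = 1 & forall z, x z = \sum_a lam a * vpoint a z].

Definition aff (G : {set E * V}) (x : E + V -> R) : Prop :=
  exists mu : E * V -> R,
    [/\ forall a, a \notin G -> mu a = 0,
        \sum_a mu a = 1 & forall z, x z = \sum_a mu a * vpoint a z].

Definition relint (G : {set E * V}) (x : E + V -> R) : Prop :=
  conv G x /\ exists eps : R, 0 < eps /\
    forall y, aff G y -> (forall z, `|y z - x z| < eps) -> conv G y.

Definition boundary (G : {set E * V}) (x : E + V -> R) : Prop :=
  conv G x /\ ~ relint G x.

(* a triangulation of Q_G, given by the spanning trees of its maximal simplices *)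
Definition triangulation (G : {set E * V}) (T : {set {set E * V}}) : Prop :=
  [/\ forall t, t \in T -> spanning_tree G t,
      forall t1 t2, t1 \in T -> t2 \in T ->
        exists S : {set E * V}, [/\ S \subset t1, S \subset t2 &
          forall x, (conv t1 x /\ conv t2 x) <-> conv S x]
    & forall x, conv G x <-> exists2 t, t \in T & conv t x].

Definition face_of (T : {set {set E * V}}) (S : {set E * V}) : Prop :=
  exists2 t, t \in T & S \subset t.

Definition interior_simplex (G S : {set E * V}) : Prop :=
  ~ (forall x, conv S x -> boundary G x).

End RootPolytope.

(* For a spanning tree Gam and an edge a = ev of Gam, let A be the side of e in Gam - a.
   Summing x(y) over y in A, with sign + on emerald and - on violet vertices, gives a
   linear form that is 1 on the vertex i_e + i_v of Q_G and 0 on the vertices of the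
   other edges of Gam (their endpoints lie on the same side): it is the coordinate of a
   in the simplex of Gam.
   Take x0 in the relative interiors of sigma and of Q_G, a vertex c of C, and push x0
   to xe = x0 + eps dir, where dir is the sum over all vertices z of i_z - i_c with its
   violet entries negated, corrected to stay in the affine hull of Q_G.  The coordinate
   of dir at an edge a outside Sigma is #|A| - #|E + V| [c \in A], positive exactly when
   the violet endpoint of a faces C.  Hence, for eps small, a cell Gam of T contains xe
   iff Sigma is in Gam (then x0, whose coordinates on Sigma are positive, lies in the
   simplex of Gam too) and every edge of Gam outside Sigma has its violet endpoint
   facing C; xe then lies in the open simplex of Gam.  Some cell contains xe since xe
   is in Q_G, and two such cells coincide since a cell meeting the open simplex of
   another contains it. *)

From mathcomp Require Import all_boot all_order all_algebra.
From mathcomp Require Import reals boolp.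
From mathcomp Require Import ring lra.
Set Implicit Arguments. Unset Strict Implicit. Unset Printing Implicit Defensive.
Import Order.TTheory GRing.Theory Num.Theory.
Local Open Scope ring_scope.

Section FundamentalCut.
Variables E V : finType.
Implicit Types (S Gam : {set E * V}) (C X : {set E + V}) (a b : E * V).

Lemma sadj_sym S : symmetric (sadj S).
Proof. by case=> [e|v] [e'|v']. Qed.

Lemma sadj_subset S S' : S \subset S' -> subrel (sadj S) (sadj S').
Proof. by move=> /subsetP sub [e|v] [e'|v'] //= /sub. Qed.

Lemma connect_sadj_subset S S' :
  S \subset S' -> subrel (connect (sadj S)) (connect (sadj S')).
Proof. by move=> sub; apply: connect_sub => x y /(sadj_subset sub)/connect1. Qed.

Lemma sadj_setD1 Gam a x y :
  sadj Gam x y -> ~~ sadj (Gam :\ a) x y -> (y == inl a.1) || (y == inr a.2).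
Proof.
case: a => e v; case: x => [e'|v']; case: y => [e''|v''] //= xy;
  by rewrite !inE xy andbT negbK => /eqP [? ?]; subst; rewrite /= ?eqxx ?orbT.
Qed.

Definition emerald_side Gam a : {set E + V} :=
  [set y | connect (sadj (Gam :\ a)) (inl a.1) y].

Lemma emerald_side_closed Gam a y z :
  sadj (Gam :\ a) y z -> (y \in emerald_side Gam a) = (z \in emerald_side Gam a).
Proof. by move=> yz; rewrite !inE (same_connect1r (sym_connect_sym (@sadj_sym _)) yz). Qed.

Lemma emerald_in_side Gam a : inl a.1 \in emerald_side Gam a.
Proof. by rewrite inE connect0. Qed.

Lemma violet_notin_side Gam a :
  cycle_free Gam -> a \in Gam -> inr a.2 \notin emerald_side Gam a.
Proof.
case: a => e v cf aG /=; rewrite inE; apply/negP => /connectP [p ep vE].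
case: (shortenP ep) vE => q eq uq _ vE.
apply: cf; exists (inl e :: q); split => //.
- case: q eq uq vE => [|y [|y' q]] //=.
  by rewrite andbT => yv _ yE; move: yv; rewrite -yE /= !inE eqxx.
- rewrite /= rcons_path (sub_path (sadj_subset _) eq) ?subD1set //=.
  by rewrite -vE.
Qed.

Lemma edge_side Gam a b :
  b \in Gam :\ a -> (inl b.1 \in emerald_side Gam a) = (inr b.2 \in emerald_side Gam a).
Proof. by case: b => e v ev; apply: (@emerald_side_closed _ _ (inl e) (inr v)). Qed.

Section Crossing.
Variables (Gam : {set E * V}) (a : E * V) (X : {set E + V}) (y : E + V).
Hypothesis X_closed : forall u w, sadj (Gam :\ a) u w -> (u \in X) = (w \in X).
Hypothesis X_endpoint : forall w : E + V, (w == inl a.1) || (w == inr a.2) -> w \in X -> w = y.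

Lemma path_cross p x :
  path (sadj Gam) x p -> x \notin X -> last x p \in X ->
  exists2 q, path (sadj Gam) y q /\ last y q = last x p & (size q < size p)%N.
Proof.
elim: p x => [|z p IH] x /=; first by move=> _ /negPf ->.
case/andP=> xz zp xX lastX; have [zX|zX] := boolP (z \in X).
  have <- : z = y.
    apply: (X_endpoint _ zX); apply: (sadj_setD1 xz).
    by apply: contraNN xX => /X_closed ->.
  by exists p.
by have [q qp qs] := IH z zp zX lastX; exists q => //; apply: ltnW.
Qed.

Lemma within_cross C x n :
  C \subset X -> x \notin X -> within Gam C x n -> exists2 m, (m < n)%N & within Gam C y m.
Proof.
move=> /subsetP CX xX [p [xp lastC pn]].
have [q [yq lastq] qp] := path_cross xp xX (CX _ lastC).
by exists (size q); [exact: leq_trans qp pn | exists q; rewrite lastq].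
Qed.

End Crossing.

Lemma not_closer_side Gam a C :
  cycle_free Gam -> a \in Gam -> C \subset emerald_side Gam a ->
  ~ closer Gam C (inr a.2) (inl a.1).
Proof.
move=> cf aG CX [n [vn []]].
have endX w : (w == inl a.1) || (w == inr a.2) -> w \in emerald_side Gam a -> w = inl a.1.
  by case/orP=> /eqP -> // vX; case/negP: (violet_notin_side cf aG).
have [m mn [p [ep lastp pm]]] :=
  within_cross (@emerald_side_closed Gam a) endX CX (violet_notin_side cf aG) vn.
by exists p; split => //; apply: leq_trans pm (ltnW mn).
Qed.

Lemma closer_side Gam a C c :
  cycle_free Gam -> gconnected Gam -> a \in Gam -> c \in C ->
  C \subset ~: emerald_side Gam a -> closer Gam C (inr a.2) (inl a.1).
Proof.
move=> cf connGam aG cC CX; apply: contrapT => not_closer.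
have closedX u w :
    sadj (Gam :\ a) u w -> (u \in ~: emerald_side Gam a) = (w \in ~: emerald_side Gam a).
  by move=> uw; rewrite !in_setC (emerald_side_closed uw).
have endX w : (w == inl a.1) || (w == inr a.2) -> w \in ~: emerald_side Gam a -> w = inr a.2.
  by case/orP=> /eqP -> //; rewrite in_setC emerald_in_side.
have eX : inl a.1 \notin ~: emerald_side Gam a by rewrite in_setC negbK emerald_in_side.
have never n : ~ within Gam C (inr a.2) n.
  elim/ltn_ind: n => n IH vn.
  have en : within Gam C (inl a.1) n.
    by apply: contrapT => en; apply: not_closer; exists n.
  by have [m mn vm] := within_cross closedX endX CX eX en; apply: IH mn vm.
have /connectP [p vp lastp] := connGam (inr a.2) c.
by apply: (never (size p)); exists p; split => //; rewrite -lastp.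
Qed.

Lemma closer_sideP Gam a C c :
  cycle_free Gam -> gconnected Gam -> a \in Gam -> c \in C ->
  C \subset [set y | connect (sadj (Gam :\ a)) c y] ->
  closer Gam C (inr a.2) (inl a.1) <-> c \notin emerald_side Gam a.
Proof.
move=> cf connGam aG cC /subsetP Cc; split=> [cl | cX].
  apply/negP => cX; apply: (not_closer_side cf aG _ cl).
  apply/subsetP => y /Cc; rewrite !inE in cX * => cy; exact: connect_trans cX cy.
apply: (closer_side cf connGam aG cC); apply/subsetP => y /Cc; rewrite !inE => cy.
apply: contra cX; rewrite !inE => ay; apply: connect_trans ay _.
by rewrite (sym_connect_sym (@sadj_sym _)).
Qed.

End FundamentalCut.

Section Near0.
Variable R : realFieldType.
Implicit Types (P Q : R -> Prop) (a b e : R).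

Definition near0 P := exists2 e, 0 < e & forall d, 0 < d <= e -> P d.

Lemma near0_impl P Q : (forall d, 0 < d -> P d -> Q d) -> near0 P -> near0 Q.
Proof.
by move=> PQ [e e_gt0 Pe]; exists e => // d /andP[d_gt0 de]; apply/PQ/Pe/andP.
Qed.

Lemma near0_and P Q : near0 P -> near0 Q -> near0 (fun d => P d /\ Q d).
Proof.
move=> [e1 e1_gt0 P1] [e2 e2_gt0 Q2]; exists (Num.min e1 e2); first by rewrite lt_min e1_gt0.
move=> d /andP[d_gt0]; rewrite le_min => /andP[d1 d2].
by split; [apply: P1 | apply: Q2]; apply/andP.
Qed.

Lemma near0_all (I : finType) (P : I -> R -> Prop) :
  (forall i, near0 (P i)) -> near0 (fun d => forall i, P i d).
Proof.
move=> nearP; suff: near0 (fun d => forall i, i \in enum I -> P i d).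
  by apply: near0_impl => d _ Pd i; apply: Pd; rewrite mem_enum.
elim: (enum I) => [|i r IH]; first by exists 1.
apply: near0_impl (near0_and (nearP i) IH) => d _ [Pi Pr] j.
by rewrite in_cons => /predU1P[->|]; [exact: Pi | exact: Pr].
Qed.

Lemma near0_small b e : 0 < e -> near0 (fun d => d * `|b| < e).
Proof.
move=> e_gt0; have b1_gt0 : 0 < `|b| + 1 by rewrite ltr_wpDl.
exists (e / (`|b| + 1)); first exact: divr_gt0.
move=> d /andP[d_gt0]; rewrite ler_pdivlMr // mulrDr mulr1 => de; lra.
Qed.

Lemma near0_sign a b :
  near0 (fun d => (0 < a -> 0 < a + d * b) /\ (0 <= a + d * b -> 0 <= a)).
Proof.
have norm_bounds d : 0 < d -> - (d * `|b|) <= d * b <= d * `|b|.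
  move=> d_gt0; rewrite -mulrN !ler_pM2l // ler_norm andbT.
  by rewrite lerNl -normrN ler_norm.
case: (ltrgt0P a) => [a_gt0 | a_lt0 | <-].
- apply: near0_impl (near0_small b a_gt0) => d d_gt0 small.
  by have /andP[] := norm_bounds d d_gt0; split => // _; lra.
- have na_gt0 : 0 < - a by rewrite oppr_gt0.
  apply: near0_impl (near0_small b na_gt0) => d d_gt0 small.
  by have /andP[] := norm_bounds d d_gt0; split => [|?]; lra.
- by exists 1 => // d _; split => //; rewrite ltxx.
Qed.

End Near0.

Lemma sum_indicator (R : pzSemiRingType) (T : finType) (P : pred T) (z : T) :
  \sum_(u | P u) ((u == z)%:R : R) = (P z)%:R.
Proof.
have [Pz|nPz] := boolP (P z).
  by rewrite (bigD1 z) //= eqxx big1 ?addr0 // => u /andP[_ /negPf->].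
by rewrite big1 // => u Pu; case: eqP Pu nPz => // -> ->.
Qed.

Lemma sum_mem_card (R : pzSemiRingType) (T : finType) (A : {set T}) :
  \sum_u ((u \in A)%:R : R) = #|A|%:R.
Proof. by rewrite -sumr_const [RHS]big_mkcond; apply: eq_bigr => u _; case: (u \in A). Qed.

Section TreeCoordinates.
Variables (R : realType) (E V : finType).
Implicit Types (S Gam : {set E * V}) (A : {set E + V}) (a b : E * V) (lam mu : E * V -> R).

Definition sg (u : E + V) : R := if u is inl _ then 1 else -1.

Definition vcomb lam : E + V -> R := fun z => \sum_a lam a * vpoint R a z.

Definition smass A (x : E + V -> R) : R := \sum_(u in A) sg u * x u.

Definition emass (x : E + V -> R) : R := \sum_e x (inl e).

Definition sgdiff (c z : E + V) : E + V -> R :=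
  fun u => sg u * ((u == z)%:R - (u == c)%:R).

Definition spread (c : E + V) : E + V -> R := fun u => \sum_z sgdiff c z u.

Definition tcoord Gam (x : E + V -> R) a : R :=
  if a \in Gam then smass (emerald_side Gam a) x else 0.

Lemma sg_sq u : sg u * sg u = 1.
Proof. by case: u => [e|v]; rewrite /= ?mulr1 ?mulrNN ?mulr1. Qed.

Lemma vpoint_sgdiff e v : vpoint R (e, v) = sgdiff (inr v) (inl e).
Proof. by apply/funext => -[u|u]; rewrite /vpoint /sgdiff /=; ring. Qed.

Lemma sgdiffxx c : sgdiff c c = fun _ => 0.
Proof. by apply/funext => u; rewrite /sgdiff subrr mulr0. Qed.

Lemma sgdiffC c z : sgdiff c z = fun u => -1 * sgdiff z c u.
Proof. by apply/funext => u; rewrite /sgdiff; ring. Qed.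

Lemma sgdiff_trans c w z : sgdiff c z = fun u => sgdiff c w u + sgdiff w z u.
Proof. by apply/funext => u; rewrite /sgdiff; ring. Qed.

Lemma smass_axpy A x y k : smass A (fun u => x u + k * y u) = smass A x + k * smass A y.
Proof. by rewrite /smass mulr_sumr -big_split; apply: eq_bigr => u _ /=; ring. Qed.

Lemma emass_axpy x y k : emass (fun u => x u + k * y u) = emass x + k * emass y.
Proof. by rewrite /emass mulr_sumr -big_split. Qed.

Lemma tcoord_axpy Gam x y k a :
  tcoord Gam (fun u => x u + k * y u) a = tcoord Gam x a + k * tcoord Gam y a.
Proof. by rewrite /tcoord; case: ifP => _; rewrite ?smass_axpy // mulr0 addr0. Qed.

Lemma smass_sum A (I : finType) (F : I -> E + V -> R) :
  smass A (fun u => \sum_i F i u) = \sum_i smass A (F i).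
Proof. by rewrite /smass; under eq_bigr do rewrite mulr_sumr; rewrite exchange_big. Qed.

Lemma smass_vcomb A lam : smass A (vcomb lam) = \sum_a lam a * smass A (vpoint R a).
Proof.
rewrite smass_sum; apply: eq_bigr => a _.
by rewrite /smass mulr_sumr; apply: eq_bigr => u _; ring.
Qed.

Lemma smass_sgdiff A c z : smass A (sgdiff c z) = (z \in A)%:R - (c \in A)%:R.
Proof.
rewrite /smass /sgdiff; under eq_bigr do rewrite mulrA sg_sq mul1r.
by rewrite sumrB !sum_indicator.
Qed.

Lemma smass_vpoint A b : smass A (vpoint R b) = (inl b.1 \in A)%:R - (inr b.2 \in A)%:R.
Proof. by case: b => e v; rewrite vpoint_sgdiff smass_sgdiff. Qed.

Lemma smass_spread A c : smass A (spread c) = #|A|%:R - (c \in A)%:R * #|{: E + V}|%:R.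
Proof.
rewrite smass_sum; under eq_bigr do rewrite smass_sgdiff.
by rewrite sumrB sum_mem_card sumr_const mulr_natr.
Qed.

Lemma smass_spread_gt0 A c u : u \in A -> c \notin A -> 0 < smass A (spread c).
Proof.
move=> uA cA; rewrite smass_spread (negbTE cA) mul0r subr0 ltr0n card_gt0.
by apply/set0Pn; exists u.
Qed.

Lemma smass_spread_lt0 A c u : u \notin A -> c \in A -> smass A (spread c) < 0.
Proof.
move=> uA cA; rewrite smass_spread cA mul1r subr_lt0 ltr_nat -cardsT proper_card //.
by rewrite properT; apply: contraNneq uA => ->; rewrite inE.
Qed.

Lemma emass_vcomb lam : emass (vcomb lam) = \sum_a lam a.
Proof.
rewrite /emass /vcomb exchange_big; apply: eq_bigr => -[e v] _.
rewrite -mulr_sumr /vpoint /=; under eq_bigr do rewrite addr0.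
by rewrite sum_indicator mulr1.
Qed.

Definition supported_on S lam := forall a, a \notin S -> lam a = 0.

Definition spanned S (x : E + V -> R) := exists2 lam, supported_on S lam & x = vcomb lam.

Lemma tcoord_vcomb Gam lam :
  cycle_free Gam -> supported_on Gam lam -> tcoord Gam (vcomb lam) = lam.
Proof.
move=> cf lam_supp; apply/funext => a; rewrite /tcoord.
have [aG|aG] := ifPn; last by rewrite lam_supp.
rewrite smass_vcomb (bigD1 a) //= big1 => [|b ba].
  rewrite smass_vpoint emerald_in_side (negbTE (violet_notin_side cf aG)).
  by rewrite subr0 mulr1 addr0.
have [bG|bG] := boolP (b \in Gam); last by rewrite lam_supp ?mul0r.
by rewrite smass_vpoint (@edge_side _ _ Gam a b) ?subrr ?mulr0 // in_setD1 ba.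
Qed.

Lemma tcoord_supported Gam x : supported_on Gam (tcoord Gam x).
Proof. by move=> a /negbTE aG; rewrite /tcoord aG. Qed.

Lemma vcomb_tcoord Gam x : cycle_free Gam -> spanned Gam x -> vcomb (tcoord Gam x) = x.
Proof. by move=> cf [lam lam_supp ->]; rewrite tcoord_vcomb. Qed.

Lemma spanned0 S : spanned S (fun _ => 0).
Proof.
exists (fun _ => 0) => //; apply/funext => z.
by rewrite /vcomb big1 // => a _; rewrite mul0r.
Qed.

Lemma spannedD S x y : spanned S x -> spanned S y -> spanned S (fun u => x u + y u).
Proof.
move=> [lam lam_supp ->] [mu mu_supp ->]; exists (fun a => lam a + mu a).
  by move=> a aS; rewrite lam_supp ?mu_supp ?addr0.
by apply/funext => z; rewrite /vcomb -big_split; apply: eq_bigr => a _; rewrite mulrDl.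
Qed.

Lemma spannedZ S k x : spanned S x -> spanned S (fun u => k * x u).
Proof.
move=> [lam lam_supp ->]; exists (fun a => k * lam a).
  by move=> a aS; rewrite lam_supp ?mulr0.
by apply/funext => z; rewrite /vcomb mulr_sumr; apply: eq_bigr => a _; rewrite mulrA.
Qed.

Lemma spanned_sum S (I : finType) (F : I -> E + V -> R) :
  (forall i, spanned S (F i)) -> spanned S (fun u => \sum_i F i u).
Proof.
move=> FS; elim: (index_enum I) => [|i r IH].
  have -> : (fun u => \sum_(i <- [::]) F i u) = fun _ => 0.
    by apply/funext => u; rewrite big_nil.
  exact: spanned0.
have -> : (fun u => \sum_(j <- i :: r) F j u) = fun u => F i u + \sum_(j <- r) F j u.
  by apply/funext => u; rewrite big_cons.
exact: spannedD.
Qed.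

Lemma spanned_vpoint S b : b \in S -> spanned S (vpoint R b).
Proof.
move=> bS; exists (fun a => (a == b)%:R).
  by move=> a aS; have /negPf-> : a != b by apply: contraNneq aS => ->.
apply/funext => z; rewrite /vcomb (bigD1 b) //= eqxx mul1r big1 ?addr0 // => a /negPf->.
exact: mul0r.
Qed.

Lemma spanned_sgdiff_edge S w u : sadj S w u -> spanned S (sgdiff w u).
Proof.
case: w u => [e|v] [e'|v'] //= wu.
  by rewrite sgdiffC -vpoint_sgdiff; apply/spannedZ/spanned_vpoint.
by rewrite -vpoint_sgdiff; apply: spanned_vpoint.
Qed.

Lemma spanned_sgdiff S c z : connect (sadj S) c z -> spanned S (sgdiff c z).
Proof.
move=> /connectP[p cp ->] {z}; elim/last_ind: p cp => [|p w IH] /=.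
  by rewrite sgdiffxx => _; exact: spanned0.
rewrite rcons_path last_rcons => /andP[/IH cp pw].
by rewrite (sgdiff_trans c (last c p)); apply: spannedD cp (spanned_sgdiff_edge pw).
Qed.

Lemma spanned_connected S Gam x : gconnected Gam -> spanned S x -> spanned Gam x.
Proof.
move=> connGam [lam _ ->]; apply: spanned_sum => -[e v]; apply: spannedZ.
by rewrite vpoint_sgdiff; apply: spanned_sgdiff.
Qed.

End TreeCoordinates.

Section Cells.
Variables (R : realType) (E V : finType).
Implicit Types (S G Gam Sigma : {set E * V}) (x y : E + V -> R).

Lemma conv_subset S S' x : S \subset S' -> conv S x -> conv S' x.
Proof.
move=> /subsetP SS' [lam [lam_ge0 lam_supp lam_sum xE]]; exists lam; split => // a aS'.
by apply: lam_supp; apply: contra aS'; apply: SS'.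
Qed.

Lemma conv_mid S x y : conv S x -> conv S y -> conv S (fun z => 2^-1 * x z + 2^-1 * y z).
Proof.
move=> [lam [lam_ge0 lam_supp lam_sum xE]] [mu [mu_ge0 mu_supp mu_sum yE]].
exists (fun a => 2^-1 * lam a + 2^-1 * mu a); split.
- by move=> a; have := lam_ge0 a; have := mu_ge0 a; lra.
- by move=> a aS; rewrite lam_supp ?mu_supp ?mulr0 ?addr0.
- by rewrite big_split /= -!mulr_sumr lam_sum mu_sum; lra.
- by move=> z; rewrite xE yE !mulr_sumr -big_split; apply: eq_bigr => a _ /=; ring.
Qed.

Lemma conv_treeP Gam S x :
  cycle_free Gam -> gconnected Gam -> spanned S x -> emass x = 1 ->
  conv Gam x <-> forall a, 0 <= tcoord Gam x a.
Proof.
move=> cf connGam xS x_mass; split=> [[lam [lam_ge0 lam_supp _ xE]] a | coord_ge0].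
  by rewrite (funext xE) -/(vcomb lam) tcoord_vcomb.
have xE := vcomb_tcoord cf (spanned_connected connGam xS).
exists (tcoord Gam x); split => //; first exact: tcoord_supported.
  by rewrite -emass_vcomb xE.
by move=> z; rewrite -{1}xE.
Qed.

Lemma cell_support G T t1 t2 x a :
  triangulation R G T -> t1 \in T -> t2 \in T -> conv t1 x -> conv t2 x ->
  tcoord t1 x a != 0 -> a \in t2.
Proof.
move=> [Ttree Tint _] t1T t2T xt1 xt2; have [_ cf1 _] := Ttree _ t1T.
have [S [St1 St2 /(_ x) [/(_ (conj xt1 xt2)) [lam [_ lam_supp _ xE]] _]]] := Tint _ _ t1T t2T.
have lam_supp1 : supported_on t1 lam.
  by move=> b bt1; apply: lam_supp; apply: contra bt1; apply/subsetP.
rewrite (funext xE) -/(vcomb lam) tcoord_vcomb // => lam_a.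
by apply: (subsetP St2); apply: contraNT lam_a => /lam_supp ->.
Qed.

Lemma relint_mid G x y : relint G x -> conv G y -> relint G (fun z => 2^-1 * x z + 2^-1 * y z).
Proof.
move=> [xG [e [e_gt0 ball]]] yG; split; first exact: conv_mid.
exists (e / 2); split => [|w [mu [mu_supp mu_sum wE]] w_near]; first exact: divr_gt0.
have [lam [_ lam_supp lam_sum yE]] := yG.
pose u z := 2 * w z - y z.
have wE' : w = fun z => 2^-1 * u z + 2^-1 * y z by apply/funext => z; rewrite /u; field.
rewrite wE'; apply: conv_mid yG; apply: ball.
  exists (fun a => 2 * mu a - lam a); split.
  - by move=> a aG; rewrite mu_supp ?lam_supp // mulr0 subr0.
  - by rewrite sumrB -mulr_sumr mu_sum lam_sum; lra.
  - by move=> z; rewrite /u wE yE mulr_sumr -sumrB; apply: eq_bigr => a _; ring.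
move=> z; have := w_near z.
have -> : u z - x z = 2 * (w z - (2^-1 * x z + 2^-1 * y z)) by rewrite /u; field.
by rewrite normrM normr_nat; lra.
Qed.

Lemma relint_near0 G x D :
  relint G x -> spanned G D -> emass D = 0 ->
  near0 (fun d => conv G (fun z => x z + d * D z)).
Proof.
move=> [[lam [_ lam_supp lam_sum xE]] [e [e_gt0 ball]]] [nu nu_supp ->] D_mass.
apply: near0_impl (near0_all (fun z => near0_small (vcomb nu z) e_gt0)) => d d_gt0 small.
apply: ball => [|z]; last by rewrite addrAC subrr add0r normrM gtr0_norm.
exists (fun a => lam a + d * nu a); split.
- by move=> a aG; rewrite lam_supp ?nu_supp ?mulr0 ?addr0.
- by rewrite big_split /= -mulr_sumr lam_sum -emass_vcomb D_mass mulr0 addr0.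
- by move=> z; rewrite xE /vcomb mulr_sumr -big_split; apply: eq_bigr => a _ /=; ring.
Qed.

Lemma interior_simplex_point G Sigma :
  Sigma \subset G -> interior_simplex R G Sigma ->
  exists lam : E * V -> R, [/\ supported_on Sigma lam, forall a, a \in Sigma -> 0 < lam a,
                  \sum_a lam a = 1 & relint G (vcomb lam)].
Proof.
move=> SigmaG intSigma.
have [x1 x1Sigma x1G] : exists2 x1 : E + V -> R, conv Sigma x1 & relint G x1.
  apply: contrapT => no_x1; apply: intSigma => x xSigma.
  by split=> [|xG]; [exact: conv_subset xSigma | apply: no_x1; exists x].
have [lam1 [lam1_ge0 lam1_supp lam1_sum x1E]] := x1Sigma.
have Sigma_gt0 : 0 < (#|Sigma|%:R : R).
  rewrite ltr0n; apply/card_gt0P; apply: contrapT => empty; move: lam1_sum.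
  rewrite big1 => [/esym/eqP|a _]; first by rewrite oner_eq0.
  by apply: lam1_supp; apply/negP => aS; apply: empty; exists a.
pose beta a : R := (a \in Sigma)%:R / #|Sigma|%:R.
have beta_ge0 a : 0 <= beta a by rewrite divr_ge0 ?ler0n ?ltW.
have beta_supp : supported_on Sigma beta by move=> a /negPf aS; rewrite /beta aS mul0r.
have beta_sum : \sum_a beta a = 1 by rewrite -mulr_suml sum_mem_card divff ?gt_eqF.
have bary_conv : conv G (vcomb beta) by apply: conv_subset SigmaG _; exists beta.
exists (fun a => 2^-1 * lam1 a + 2^-1 * beta a); split.
- by move=> a aS; rewrite lam1_supp ?beta_supp ?mulr0 ?addr0.
- move=> a aS; have := lam1_ge0 a; have : 0 < beta a by rewrite /beta aS mul1r invr_gt0.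
  by lra.
- by rewrite big_split /= -!mulr_sumr lam1_sum beta_sum; lra.
have -> : vcomb (fun a => 2^-1 * lam1 a + 2^-1 * beta a) =
          fun z => 2^-1 * x1 z + 2^-1 * vcomb beta z.
  by apply/funext => z; rewrite x1E /vcomb !mulr_sumr -big_split; apply: eq_bigr => a _ /=; ring.
exact: relint_mid.
Qed.

End Cells.

Section AdmissibleCell.
Variables (R : realType) (E V : finType) (G Sigma t0 : {set E * V}).
Variables (T : {set {set E * V}}) (c : E + V) (lam0 : E * V -> R).
Hypotheses (connG : gconnected G) (triT : triangulation R G T).
Hypotheses (t0T : t0 \in T) (Sigma_t0 : Sigma \subset t0).
Hypotheses (lam0_supp : supported_on Sigma lam0) (lam0_gt0 : forall a, a \in Sigma -> 0 < lam0 a).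
Hypotheses (lam0_sum : \sum_a lam0 a = 1) (x0G : relint G (vcomb lam0)).

Definition admissible (Gam : {set E * V}) :=
  [/\ Gam \in T, Sigma \subset Gam &
      forall (e : E) (v : V), (e, v) \in Gam -> (e, v) \notin Sigma ->
        closer Gam [set y | connect (sadj Sigma) c y] (inr v) (inl e)].

Let cell_tree t : t \in T -> spanning_tree G t.
Proof. by case: triT => Ttree _ _; apply: Ttree. Qed.

Let x0 := vcomb lam0.

(* Subtracting a multiple of x0 makes the coefficients of [dir] sum to 0, so that
   x0 + eps dir stays in the affine hull of Q_G; it does not change the coordinates
   of the edges outside Sigma. *)
Let dir : E + V -> R := fun z => spread R c z + (- emass (spread R c)) * x0 z.

Lemma conv_x0 : conv Sigma x0.
Proof.
exists lam0; split => // a.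
by have [/lam0_gt0/ltW|/lam0_supp->] := boolP (a \in Sigma).
Qed.

Lemma spanned_x0 : spanned G x0.
Proof. by apply: (@spanned_connected _ _ _ Sigma) => //; exists lam0. Qed.

Lemma emass_x0 : emass x0 = 1.
Proof. by rewrite emass_vcomb. Qed.

Lemma spanned_dir : spanned G dir.
Proof.
apply: spannedD; last exact/spannedZ/spanned_x0.
by apply: spanned_sum => z; apply: spanned_sgdiff.
Qed.

Lemma emass_dir : emass dir = 0.
Proof. by rewrite emass_axpy emass_x0 mulr1 addrN. Qed.

Lemma tcoord_x0 Gam : cycle_free Gam -> Sigma \subset Gam -> tcoord Gam x0 = lam0.
Proof.
move=> cf /subsetP SigmaGam; apply: tcoord_vcomb => // a aGam.
by apply: lam0_supp; apply: contra aGam; apply: SigmaGam.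
Qed.

Lemma closer_outside Gam a :
  Gam \in T -> Sigma \subset Gam -> a \in Gam -> a \notin Sigma ->
  closer Gam [set y | connect (sadj Sigma) c y] (inr a.2) (inl a.1) <->
  c \notin emerald_side Gam a.
Proof.
move=> GamT SigmaGam aGam aSigma; have [_ cf connGam] := cell_tree GamT.
apply: closer_sideP => //; first by rewrite inE connect0.
apply/subsetP => y; rewrite !inE; apply: connect_sadj_subset.
by rewrite subsetD1 SigmaGam aSigma.
Qed.

Section Perturbation.
Variable eps : R.
Let xe : E + V -> R := fun z => x0 z + eps * dir z.
Hypotheses (eps_gt0 : 0 < eps) (xeG : conv G xe).
Hypothesis stable_gt0 : forall t a, 0 < tcoord t x0 a -> 0 < tcoord t xe a.
Hypothesis stable_ge0 : forall t a, 0 <= tcoord t xe a -> 0 <= tcoord t x0 a.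

Lemma spanned_xe : spanned G xe.
Proof. exact/spannedD/spannedZ/spanned_dir/spanned_x0. Qed.

Lemma emass_xe : emass xe = 1.
Proof. by rewrite emass_axpy emass_x0 emass_dir mulr0 addr0. Qed.

Lemma tcoord_xe_outside Gam a :
  cycle_free Gam -> Sigma \subset Gam -> a \in Gam -> a \notin Sigma ->
  tcoord Gam xe a = eps * smass (emerald_side Gam a) (spread R c).
Proof.
move=> cf SigmaGam aGam aSigma.
rewrite !tcoord_axpy tcoord_x0 // lam0_supp // mulr0 addr0 add0r.
by rewrite /tcoord aGam.
Qed.

Lemma admissible_gt0 Gam a : admissible Gam -> a \in Gam -> 0 < tcoord Gam xe a.
Proof.
case=> GamT SigmaGam closerGam aGam; have [_ cf _] := cell_tree GamT.
have [aSigma|aSigma] := boolP (a \in Sigma).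
  by apply: stable_gt0; rewrite tcoord_x0 // lam0_gt0.
rewrite tcoord_xe_outside //; apply: mulr_gt0 => //.
apply: (smass_spread_gt0 _ (emerald_in_side Gam a)).
apply/(closer_outside GamT SigmaGam aGam aSigma).
by case: a aGam aSigma => e v; apply: closerGam.
Qed.

Lemma conv_admissible Gam : admissible Gam -> conv Gam xe.
Proof.
move=> adm; have [GamT _ _] := adm; have [_ cf connGam] := cell_tree GamT.
apply/(conv_treeP cf connGam spanned_xe emass_xe) => a.
have [aGam|aGam] := boolP (a \in Gam); first exact/ltW/admissible_gt0.
by rewrite /tcoord (negbTE aGam).
Qed.

Lemma admissible_subset Gam Gam' :
  admissible Gam -> Gam' \in T -> conv Gam' xe -> Gam \subset Gam'.
Proof.
move=> adm Gam'T xeGam'; have [GamT _ _] := adm; apply/subsetP => a aGam.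
apply: (cell_support triT GamT Gam'T (conv_admissible adm) xeGam').
by rewrite gt_eqF // admissible_gt0.
Qed.

Lemma admissible_of_conv Gam : Gam \in T -> conv Gam xe -> admissible Gam.
Proof.
move=> GamT xeGam; have [_ cf connGam] := cell_tree GamT.
have xe_ge0 := (conv_treeP cf connGam spanned_xe emass_xe).1 xeGam.
have x0Gam : conv Gam x0.
  by apply/(conv_treeP cf connGam spanned_x0 emass_x0) => a; apply: stable_ge0.
have SigmaGam : Sigma \subset Gam.
  apply/subsetP => a aSigma; have [_ cf_t0 _] := cell_tree t0T.
  apply: (cell_support triT t0T GamT (conv_subset Sigma_t0 conv_x0) x0Gam).
  by rewrite (tcoord_x0 cf_t0 Sigma_t0) gt_eqF // lam0_gt0.
split => // e v evGam evSigma.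
apply/(closer_outside GamT SigmaGam evGam evSigma)/negP => cSide.
have := xe_ge0 (e, v); rewrite tcoord_xe_outside // pmulr_rge0 // leNgt.
by rewrite (smass_spread_lt0 _ (violet_notin_side cf evGam) cSide).
Qed.

Lemma perturbed_unique_admissible : exists! Gam, admissible Gam.
Proof.
have [_ _ /(_ xe) [/(_ xeG) [Gam GamT xeGam] _]] := triT.
have adm := admissible_of_conv GamT xeGam.
exists Gam; split => // Gam' adm'; have [Gam'T _ _] := adm'.
apply/eqP; rewrite eqEsubset (admissible_subset adm Gam'T (conv_admissible adm')).
exact: admissible_subset adm' GamT xeGam.
Qed.

End Perturbation.

Lemma exists_perturbation : exists eps : R,
  [/\ 0 < eps, conv G (fun z => x0 z + eps * dir z),
      forall t a, 0 < tcoord t x0 a -> 0 < tcoord t (fun z => x0 z + eps * dir z) a &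
      forall t a, 0 <= tcoord t (fun z => x0 z + eps * dir z) a -> 0 <= tcoord t x0 a].
Proof.
have stable : near0 (fun d => forall (t : {set E * V}) (a : E * V),
    (0 < tcoord t x0 a -> 0 < tcoord t x0 a + d * tcoord t dir a) /\
    (0 <= tcoord t x0 a + d * tcoord t dir a -> 0 <= tcoord t x0 a)).
  by apply: near0_all => t; apply: near0_all => a; apply: near0_sign.
have [eps eps_gt0 /(_ eps)] := near0_and (relint_near0 x0G spanned_dir emass_dir) stable.
rewrite eps_gt0 lexx => /(_ isT) [xeG xe_stable].
by exists eps; split => // t a; rewrite tcoord_axpy; have [] := xe_stable t a.
Qed.

Theorem exists_unique_admissible : exists! Gam, admissible Gam.
Proof.
have [eps [eps_gt0 xeG stable_gt0 stable_ge0]] := exists_perturbation.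
exact: (perturbed_unique_admissible eps_gt0 xeG stable_gt0 stable_ge0).
Qed.

End AdmissibleCell.

Theorem lemma4p1 (R : realType) (E V : finType) (G : {set E * V})
    (T : {set {set E * V}}) (Sigma : {set E * V}) (C : {set E + V}) :
  gconnected G ->
  triangulation R G T ->
  Sigma \subset G -> cycle_free Sigma ->
  face_of T Sigma -> interior_simplex R G Sigma ->
  component Sigma C ->
  exists! Gam : {set E * V},
    [/\ Gam \in T, Sigma \subset Gam &
        forall (e : E) (v : V), (e, v) \in Gam -> (e, v) \notin Sigma ->
          closer Gam C (inr v) (inl e)].
Proof.
move=> connG triT SigmaG _ [t0 t0T Sigma_t0] intSigma [c ->].
have [lam0 [lam0_supp lam0_gt0 lam0_sum x0G]] := interior_simplex_point SigmaG intSigma.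
exact: (exists_unique_admissible c connG triT t0T Sigma_t0 lam0_supp lam0_gt0 lam0_sum x0G).
Qed.
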